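(* There is no flag complex whose $h$-polynomial $h_0+h_1t+\cdots+h_dt^d$ equals $1+3t+3t^2$; that is, no flag complex of dimension $d-1\ge 1$ has $h$-vector $(1,3,3,0,\ldots,0)$. In particular, the face vector $(1,3,3)$ of the boundary of a triangle is not the $h$-vector of any flag complex.
   Context: A flag complex is the independence complex $\mathrm{Ind}(G)$ of a graph $G$ (faces are independent sets). For a $(d-1)$-dimensional complex with face vector $(f_{-1},\ldots,f_{d-1})$ ($f_i$ = number of faces with $i+1$ elements), the $h$-vector is $(h_0,\ldots,h_d)$ with $h_j=\sum_{i=0}^{j}(-1)^{j-i}\binom{d-i}{j-i}f_{i-1}$. *)

From HB Require Import structures.
From mathcomp Require Import all_boot all_order all_algebra.
Set Implicit Arguments. Unset Strict Implicit. Unset Printing Implicit Defensive.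
Import Order.TTheory GRing.Theory Num.Theory.

Definition simple_graph (T : finType) (e : rel T) : Prop :=
  symmetric e /\ irreflexive e.

(* Independent sets of G = faces of the flag complex Ind(G). *)
Definition independent (T : finType) (e : rel T) (S : {set T}) : bool :=
  [forall x in S, forall y in S, ~~ e x y].

(* Number of faces with exactly i elements (this is f_{i-1} in the paper). *)
Definition nfaces (T : finType) (e : rel T) (i : nat) : nat :=
  #|[set S : {set T} | independent e S & #|S| == i]|.

(* d = max size of a face, so Ind(G) has dimension d - 1. *)
Definition cdim (T : finType) (e : rel T) : nat :=
  \max_(S : {set T} | independent e S) #|S|.

Definition hvec (T : finType) (e : rel T) (j : nat) : int :=
  (\sum_(i < j.+1)
     (-1) ^+ (j - i) * ('C(cdim e - i, j - i) * nfaces e i)%:Z)%R.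

Definition hpoly (T : finType) (e : rel T) : {poly int} :=
  \poly_(j < (cdim e).+1) hvec e j.

From HB Require Import structures.
From mathcomp Require Import all_boot all_order all_algebra.
From mathcomp Require Import zify.
Import GRing.Theory.
Set Implicit Arguments. Unset Strict Implicit. Unset Printing Implicit Defensive.

(* Let n = #|T| and let g_i count the non-independent i-subsets, so that
   f_{i-1} + g_i = C(n, i).  If the h-polynomial were 1 + 3t + 3t^2, then
   d >= 2, h_1 = 3 gives n = d + 3, h_2 = 3 then gives g_2 = 3, and h_3 = 0
   (a coefficient when d >= 3, and automatic when d = 2 since f_2 = 0) gives
   g_3 = 3(n - 2) + 1.  But every non-independent triple is an edge plus a
   third vertex, so g_3 <= g_2 (n - 2) = 3(n - 2). *)

Lemma bin2M n : 'C(n, 2) * 2 = n * n.-1.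
Proof. by have := bin_ffact n 2; rewrite !ffactnS ffactn0 muln1. Qed.

Lemma bin3M n : 'C(n, 3) * 6 = n * n.-1 * n.-2.
Proof. by have := bin_ffact n 3; rewrite !ffactnS ffactn0 muln1 mulnA. Qed.

Lemma leq_card_bigcup (I T : finType) (A : {set I}) (F : I -> {set T}) :
  #|\bigcup_(i in A) F i| <= \sum_(i in A) #|F i|.
Proof.
elim/big_rec2: _ => [|i U n _ leUn]; first by rewrite cards0.
by rewrite (leq_trans (leq_card_setU _ _).1) ?leq_add2l.
Qed.

Section IndependenceComplex.

Variables (T : finType) (e : rel T).

Definition nonfaces (i : nat) : {set {set T}} :=
  [set S : {set T} | ~~ independent e S & #|S| == i].

Lemma nfaces_add_nonfaces i : nfaces e i + #|nonfaces i| = 'C(#|T|, i).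
Proof.
rewrite -card_draws -(cardsID [set S : {set T} | independent e S]).
by congr (_ + _); apply: eq_card => S; rewrite !inE andbC.
Qed.

Lemma nfaces_gt_cdim i : cdim e < i -> nfaces e i = 0.
Proof.
move=> lt_d_i; apply/eqP; rewrite cards_eq0; apply/eqP/setP => S.
rewrite !inE; apply/negbTE/andP => -[indS /eqP cardS].
have := @leq_bigmax_cond _ (independent e) (fun S => #|S|) S indS.
by rewrite -/(cdim e) cardS leqNgt lt_d_i.
Qed.

Lemma hvec_gt_cdim j : cdim e < j -> hvec e j = 0%R.
Proof.
move=> lt_d_j; apply: big1 => i _.
have [le_i_d | lt_d_i] := leqP i (cdim e).
  by rewrite bin_small ?mul0n ?mulr0 // ltn_sub2r // (leq_ltn_trans le_i_d).
by rewrite nfaces_gt_cdim ?muln0 ?mulr0.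
Qed.

Lemma coef_hpoly j : ((hpoly e)`_j = hvec e j)%R.
Proof.
rewrite coef_poly; case: ltnP => // le_d_j.
by rewrite hvec_gt_cdim.
Qed.

Hypothesis e_irr : irreflexive e.

Lemma nonfaces_le1 i : i <= 1 -> nonfaces i = set0.
Proof.
move=> le_i_1; apply/setP => S; rewrite !inE.
apply/negbTE/andP => -[/negP notind /eqP cardS]; apply: notind.
have /card_le1_eqP eqS : #|S| <= 1 by rewrite cardS.
by apply/forall_inP => x xS; apply/forall_inP => y yS; rewrite (eqS x y) ?e_irr.
Qed.

Lemma nfaces_le1 i : i <= 1 -> nfaces e i = 'C(#|T|, i).
Proof. by move=> le_i_1; rewrite -nfaces_add_nonfaces nonfaces_le1 // cards0 addn0. Qed.

Lemma edge_nonfaces2 x y : e x y -> [set x; y] \in nonfaces 2.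
Proof.
move=> exy; have neq_xy : x != y by apply: contraTneq exy => ->; rewrite e_irr.
rewrite inE cards2 neq_xy andbT; apply/negP => /forall_inP/(_ x (set21 _ _)).
by move/forall_inP/(_ y (set22 _ _)); rewrite exy.
Qed.

Lemma card_nonfaces3_le : #|nonfaces 3| <= #|nonfaces 2| * (#|T| - 2).
Proof.
pose extend (P : {set T}) := [set z |: P | z in ~: P].
have sub3 : nonfaces 3 \subset \bigcup_(P in nonfaces 2) extend P.
  apply/subsetP => S; rewrite inE => /andP[/forall_inPn[x xS]].
  move=> /forall_inPn[y yS /negbNE exy] /eqP cardS.
  have P2 := edge_nonfaces2 exy; move: (P2); rewrite inE => /andP[_ /eqP cardP].
  have subPS : [set x; y] \subset S by apply/subsetP => z /set2P[]->.
  have [z zS zP] : exists2 z, z \in S & z \notin [set x; y].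
    by apply/subsetPn/negP => /subset_leq_card; rewrite cardS cardP.
  apply/bigcupP; exists [set x; y] => //; apply/imsetP; exists z; first by rewrite inE.
  apply/eqP; rewrite eq_sym eqEcard cardS cardsU1 zP cardP leqnn andbT.
  by rewrite subUset sub1set zS subPS.
apply: leq_trans (subset_leq_card sub3) _; apply: leq_trans (leq_card_bigcup _ _) _.
rewrite -sum_nat_const; apply: leq_sum => P; rewrite inE => /andP[_ /eqP cardP].
by apply: leq_trans (leq_imset_card _ _) _; rewrite cardsCs setCK cardP.
Qed.

Lemma hvec1 : (hvec e 1 = #|T|%:Z - (cdim e)%:Z)%R.
Proof.
rewrite /hvec !big_ord_recr big_ord0 /= !nfaces_le1 // !subSS !subn0 !bin0 !bin1.
by rewrite !exprS expr0 !mulr1 mulN1r mul1r muln1 mul1n add0r addrC.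
Qed.

Lemma hvec2 : (hvec e 2 =
  'C(cdim e, 2)%:Z - ((cdim e).-1 * #|T|)%:Z + (nfaces e 2)%:Z)%R.
Proof.
rewrite /hvec !big_ord_recr big_ord0 /= (nfaces_le1 (leq0n 1)) (nfaces_le1 (leqnn 1)).
rewrite !subSS !subn0 !bin0 !bin1 subn1.
by rewrite !exprS expr0 !mulr1 !mulN1r opprK !mul1r muln1 mul1n add0r.
Qed.

Lemma hvec3 : (hvec e 3 = - 'C(cdim e, 3)%:Z + ('C((cdim e).-1, 2) * #|T|)%:Z
                          - ((cdim e).-2 * nfaces e 2)%:Z + (nfaces e 3)%:Z)%R.
Proof.
rewrite /hvec !big_ord_recr big_ord0 /= (nfaces_le1 (leq0n 1)) (nfaces_le1 (leqnn 1)).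
rewrite !subSS !subn0 !bin0 !bin1 subn1 subn2.
by rewrite !exprS expr0 !mulr1 !mulN1r opprK !mul1r !muln1 !mul1n add0r.
Qed.

Lemma card_nonfaces_hvec133 : 2 <= cdim e ->
  (hvec e 1 = 3)%R -> (hvec e 2 = 3)%R -> (hvec e 3 = 0)%R ->
  #|nonfaces 2| = 3 /\ #|nonfaces 3| = 3 * (#|T| - 2) + 1.
Proof.
rewrite hvec1 hvec2 hvec3; case: (cdim e) => [|[|d]] // _ h1 h2 h3.
have cardT : #|T| = d.+4.+1 by lia.
move: (nfaces_add_nonfaces 2) (nfaces_add_nonfaces 3) h2 h3.
move: (bin2M d.+2) (bin2M d.+1) (bin3M d.+2) (bin2M #|T|) (bin3M #|T|).
rewrite cardT !succnK => bin2d bin2d' bin3d bin2T bin3T sum2 sum3 h2 h3.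
have card2 : #|nonfaces 2| = 3 by lia.
have f2E : nfaces e 2 * 2 = d.+4.+1 * d.+4 - 6 by lia.
(* [lia] treats nonlinear monomials as atoms: supply the two products it needs. *)
have := congr1 (muln d) f2E; have := congr1 (muln d.+4.+1) bin2d'.
by split=> //; lia.
Qed.

End IndependenceComplex.

Local Open Scope ring_scope.

Theorem mainTheorem8 (T : finType) (e : rel T) (hG : simple_graph e) :
  hpoly e <> 1 + 3%:R *: 'X + 3%:R *: 'X^2.
Proof.
move=> hP; have e_irr := hG.2.
have hv j : hvec e j = (1 + 3%:R *: 'X + 3%:R *: 'X^2 : {poly int})`_j.
  by rewrite -coef_hpoly hP.
have h1 := hv 1%N; have h2 := hv 2%N; have h3 := hv 3%N.
rewrite !coefD !coef1 !coefZ !coefX !coefXn /= ?mulr0 ?mulr1 ?addr0 ?add0r in h1 h2 h3.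
have le2d : (2 <= cdim e)%N.
  by rewrite leqNgt; apply/negP => /hvec_gt_cdim hvec2_0; rewrite hvec2_0 in h2.
have [card2 card3] := card_nonfaces_hvec133 e_irr le2d h1 h2 h3.
have := card_nonfaces3_le e_irr; rewrite card2 card3.
lia.
Qed.
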